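(* The number of integers $N$ with $2^{i-1}\le N<2^i$ for which there exist antipalindromic numbers $A,B$ with $N=A/B$ is $\Omega(\sqrt{2}^{\,i})$ as $i\to\infty$.
   Context: A positive integer $n$ is antipalindromic if its binary representation $w=w_1\cdots w_L$ (most significant digit first, no leading zeros) has even length $L$ and satisfies $w_i+w_{L+1-i}=1$ for all $i$ (the second half is the reverse complement of the first half). *)

From Stdlib Require Import Arith Reals List.

Definition bin_len (n : nat) : nat := S (Nat.log2 n).

(* n is antipalindromic: n > 0, its binary word w_1..w_L (MSB first) has even
   length L and w_i + w_{L+1-i} = 1 for all i.  Digit w_i (1-based, MSB first)
   is bit number L-i (0-based, LSB first), i.e. Nat.testbit n (L-i). *)
Definition antipalindromic (n : nat) : Prop :=
  0 < n /\ Nat.Even (bin_len n) /\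
  forall j : nat, j < bin_len n ->
    Nat.b2n (Nat.testbit n j) + Nat.b2n (Nat.testbit n (bin_len n - 1 - j)) = 1.

Definition antipal_quotient (N : nat) : Prop :=
  exists A B : nat, antipalindromic A /\ antipalindromic B /\ A = N * B.

(* For a word f of length r, the antipalindromic number whose low half is 0f
   (digits listed from the least significant one) is even with 2r+2 binary
   digits, so dividing it by B = 2 = 10_2 gives 2^r distinct quotients with 2r+1
   digits.  For an even number of digits divide by B = 10 = 1010_2 instead:
   taking the low half 011af forces the top digits of A to be 100, so A/10 has
   exactly 2r+10 digits, and the four digits a can be chosen so that 5 divides A,
   because A mod 5 depends only on a, on the antipalindromic number of f mod 5 and
   on 4^r mod 5.  In both cases f is recovered from the quotient, so there are
   2^r = Omega(sqrt2^i) of them. *)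

From Stdlib Require Import Arith Reals List Lia Lra.
Import ListNotations.

(* Binary words are read least significant bit first. *)
Fixpoint bits_to_nat (l : list bool) : nat :=
  match l with [] => 0 | b :: l' => Nat.b2n b + 2 * bits_to_nat l' end.

Definition rev_compl (l : list bool) : list bool := map negb (rev l).

Definition antipal_word (l : list bool) : list bool := l ++ rev_compl l.

Lemma bits_to_nat_app x y :
  bits_to_nat (x ++ y) = bits_to_nat x + 2 ^ length x * bits_to_nat y.
Proof. induction x as [|b x IH]; simpl; [lia|]. rewrite IH. ring. Qed.

Lemma bits_to_nat_lt l : bits_to_nat l < 2 ^ length l.
Proof. induction l as [|[|] l IH]; simpl; lia. Qed.

Lemma bits_to_nat_rcons_true u :
  2 ^ length u <= bits_to_nat (u ++ [true]) < 2 ^ S (length u).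
Proof. rewrite bits_to_nat_app. pose proof (bits_to_nat_lt u). simpl. lia. Qed.

Lemma testbit_bits_to_nat l j : Nat.testbit (bits_to_nat l) j = nth j l false.
Proof.
  induction l as [|b l IH] in j |- *.
  - destruct j; [reflexivity | apply Nat.bits_0].
  - change (bits_to_nat (b :: l)) with (Nat.b2n b + 2 * bits_to_nat l).
    destruct b, j; cbn [Nat.b2n nth].
    + now rewrite Nat.add_comm, Nat.testbit_odd_0.
    + now rewrite Nat.add_comm, Nat.testbit_odd_succ by lia.
    + apply Nat.testbit_even_0.
    + now rewrite Nat.add_0_l, Nat.testbit_even_succ by lia.
Qed.

Lemma bits_to_nat_inj x y :
  length x = length y -> bits_to_nat x = bits_to_nat y -> x = y.
Proof.
  induction x as [|a x IH] in y |- *; destruct y as [|b y]; simpl; intros Hlen Hval;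
    try reflexivity; try discriminate.
  assert (a = b) as <- by (destruct a, b; simpl in *; lia).
  f_equal. apply IH; destruct a; simpl in *; lia.
Qed.

Lemma app_inj_length {A} (x y z t : list A) :
  length x = length y -> x ++ z = y ++ t -> x = y /\ z = t.
Proof.
  intros Hlen Heq. split.
  - apply (f_equal (firstn (length x))) in Heq.
    now rewrite !firstn_app, Hlen, Nat.sub_diag, !firstn_all, <- Hlen, firstn_all,
      !firstn_O, !app_nil_r in Heq.
  - apply (f_equal (skipn (length x))) in Heq.
    now rewrite !skipn_app, Hlen, Nat.sub_diag, skipn_all, <- Hlen, skipn_all in Heq.
Qed.

Lemma rev_compl_app x y : rev_compl (x ++ y) = rev_compl y ++ rev_compl x.
Proof. unfold rev_compl. now rewrite rev_app_distr, map_app. Qed.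

Lemma length_rev_compl l : length (rev_compl l) = length l.
Proof. unfold rev_compl. now rewrite length_map, length_rev. Qed.

Lemma length_antipal_word l : length (antipal_word l) = 2 * length l.
Proof. unfold antipal_word. rewrite length_app, length_rev_compl. lia. Qed.

Lemma nth_antipal_word_mirror l j : j < length l ->
  nth (2 * length l - 1 - j) (antipal_word l) false = negb (nth j l false).
Proof.
  intros Hj. unfold antipal_word, rev_compl.
  rewrite app_nth2 by lia.
  rewrite nth_indep with (d' := negb true) by (rewrite length_map, length_rev; lia).
  rewrite map_nth, rev_nth by lia. f_equal.
  replace (length l - S (2 * length l - 1 - j - length l)) with j by lia.
  apply nth_indep. lia.
Qed.

Lemma antipal_word_cons_false l :
  antipal_word (false :: l) = false :: antipal_word l ++ [true].
Proof. unfold antipal_word, rev_compl. simpl. now rewrite map_app, app_assoc. Qed.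

Lemma antipal_word_inj x y :
  length x = length y -> antipal_word x = antipal_word y -> x = y.
Proof. intros Hlen Heq. now apply app_inj_length in Heq. Qed.

(* The leading [false] makes the top bit [true], so the word has no leading zeros. *)
Lemma antipalindromic_antipal_word l :
  antipalindromic (bits_to_nat (antipal_word (false :: l))).
Proof.
  set (w := antipal_word (false :: l)).
  assert (Hbounds : 2 ^ (2 * length l + 1) <= bits_to_nat w < 2 ^ S (2 * length l + 1)).
  { pose proof (bits_to_nat_rcons_true (antipal_word l)) as H.
    rewrite length_antipal_word, Nat.pow_succ_r' in H.
    unfold w. rewrite antipal_word_cons_false.
    change (bits_to_nat (false :: ?x)) with (0 + 2 * bits_to_nat x).
    rewrite Nat.pow_succ_r', Nat.pow_add_r, Nat.pow_1_r. lia. }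
  assert (Hlen : bin_len (bits_to_nat w) = 2 * length (false :: l)).
  { unfold bin_len. rewrite (Nat.log2_unique _ (2 * length l + 1)) by lia.
    simpl length. lia. }
  split; [|split].
  - pose proof (Nat.pow_nonzero 2 (2 * length l + 1)). lia.
  - rewrite Hlen. now exists (length (false :: l)).
  - rewrite Hlen. intros j Hj. rewrite !testbit_bits_to_nat.
    destruct (Nat.lt_ge_cases j (length (false :: l))) as [Hlt | Hge].
    + unfold w. rewrite nth_antipal_word_mirror by lia.
      unfold antipal_word. rewrite app_nth1 by lia.
      now destruct (nth j _ false).
    + replace j with (2 * length (false :: l) - 1 - (2 * length (false :: l) - 1 - j))
        at 1 by lia.
      unfold w. rewrite nth_antipal_word_mirror by lia.
      unfold antipal_word. rewrite app_nth1 by lia.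
      now destruct (nth _ _ false).
Qed.

Fixpoint words (n : nat) : list (list bool) :=
  match n with
  | 0 => [[]]
  | S n => map (cons false) (words n) ++ map (cons true) (words n)
  end.

Lemma length_words n : length (words n) = 2 ^ n.
Proof. induction n; simpl; [reflexivity|]. rewrite length_app, !length_map. lia. Qed.

Lemma in_words_length n w : In w (words n) -> length w = n.
Proof.
  induction n in w |- *; simpl.
  - now intros [<- | []].
  - intros [Hw | Hw]%in_app_or; apply in_map_iff in Hw as [v [<- Hv]];
      simpl; f_equal; auto.
Qed.

Lemma NoDup_words n : NoDup (words n).
Proof.
  induction n; simpl.
  - repeat constructor. intros [].
  - apply NoDup_app.
    + apply NoDup_map_NoDup_ForallPairs; auto. now intros x y _ _ [= ->].
    + apply NoDup_map_NoDup_ForallPairs; auto. now intros x y _ _ [= ->].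
    + intros w Hf Ht. apply in_map_iff in Hf as [x [<- _]].
      apply in_map_iff in Ht as [y [Hy _]]. discriminate.
Qed.

Section Witnesses.

Variables (A : Type) (R : A -> nat -> Prop) (P : nat -> Prop).

Hypothesis R_inj : forall x y N, R x N -> R y N -> x = y.

Lemma witness_list (L : list A) : NoDup L ->
  (forall x, In x L -> exists N, R x N /\ P N) ->
  exists s, NoDup s /\ (forall N, In N s -> P N /\ exists x, In x L /\ R x N) /\
    length s = length L.
Proof.
  induction L as [|x L IH]; intros HL Hex.
  - exists []. split; [constructor | split; [intros _ [] | reflexivity]].
  - apply NoDup_cons_iff in HL as [HxL HL].
    destruct IH as (s & Hs & HsP & Hlen); [exact HL | intros; apply Hex; now right |].
    destruct (Hex x (in_eq x L)) as (N & HxN & HN).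
    exists (N :: s). split; [|split].
    + constructor; [|exact Hs].
      intros HNs. apply HsP in HNs as [_ (y & Hy & HyN)].
      apply HxL. now rewrite (R_inj x y N HxN HyN).
    + intros M [<- | HM].
      * split; [exact HN | now exists x; split; [left |]].
      * apply HsP in HM as [HM (y & Hy & HyM)].
        split; [exact HM | now exists y; split; [right |]].
    + simpl. now f_equal.
Qed.

End Witnesses.

Lemma witnesses_of_words (r : nat) (R : list bool -> nat -> Prop) (P : nat -> Prop) :
  (forall x y N, R x N -> R y N -> x = y) ->
  (forall f, length f = r -> exists N, R f N /\ P N) ->
  exists s, NoDup s /\ (forall N, In N s -> P N) /\ length s = 2 ^ r.
Proof.
  intros R_inj Hex.
  destruct (@witness_list _ R P R_inj (words r)) as (s & Hs & HsP & Hlen).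
  - apply NoDup_words.
  - intros f Hf. apply Hex. now apply in_words_length in Hf.
  - exists s. split; [exact Hs | split].
    + intros N HN. now apply HsP.
    + now rewrite Hlen, length_words.
Qed.

Lemma antipal_quotient_of_words l m N :
  bits_to_nat (antipal_word (false :: l)) = N * bits_to_nat (antipal_word (false :: m)) ->
  antipal_quotient N.
Proof.
  intros HA. do 2 eexists.
  split; [|split; [|exact HA]]; apply antipalindromic_antipal_word.
Qed.

Lemma odd_length_quotients r : exists s, NoDup s /\
  (forall N, In N s -> 2 ^ (2 * r) <= N < 2 ^ (2 * r + 1) /\ antipal_quotient N) /\
  length s = 2 ^ r.
Proof.
  apply (witnesses_of_words r
           (fun f N => length f = r /\ N = bits_to_nat (antipal_word f ++ [true]))).
  - intros x y N [Hx ->] [Hy Heq].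
    apply bits_to_nat_inj in Heq;
      [|rewrite !length_app, !length_antipal_word; simpl; lia].
    apply app_inj_tail in Heq as [Heq _].
    apply antipal_word_inj in Heq; [exact Heq | lia].
  - intros f Hf. eexists. split; [split; [exact Hf | reflexivity] | split].
    + pose proof (bits_to_nat_rcons_true (antipal_word f)) as H.
      rewrite length_antipal_word, Hf in H. now rewrite Nat.add_1_r.
    + apply (antipal_quotient_of_words f []).
      rewrite antipal_word_cons_false. simpl. lia.
Qed.

Definition padded_word (a f : list bool) : list bool :=
  antipal_word ([false; true; true] ++ a ++ f).

Definition padded_value (a : list bool) (M P : nat) : nat :=
  6 + 8 * (bits_to_nat a + 16 * (M + P * (bits_to_nat (rev_compl a) + 64))).

Lemma padded_word_split a f : padded_word a f =
  [false; true; true] ++ a ++ antipal_word f ++ rev_compl a ++ [false; false; true].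
Proof.
  unfold padded_word, antipal_word. rewrite !rev_compl_app, <- !app_assoc. reflexivity.
Qed.

Lemma bits_to_nat_padded_word a f : length a = 4 ->
  bits_to_nat (padded_word a f) =
  padded_value a (bits_to_nat (antipal_word f)) (4 ^ length f).
Proof.
  intros Ha. rewrite padded_word_split, !bits_to_nat_app, length_rev_compl,
    length_antipal_word, Ha, Nat.pow_mul_r.
  unfold padded_value. simpl. ring.
Qed.

Lemma padded_word_bounds a f : length a = 4 ->
  2 ^ (2 * length f + 13) <= bits_to_nat (padded_word a f) < 5 * 2 ^ (2 * length f + 11).
Proof.
  intros Ha.
  set (u := [false; true; true] ++ a ++ antipal_word f ++ rev_compl a).
  replace (padded_word a f) with (u ++ [false; false; true])
    by (rewrite padded_word_split; unfold u; now rewrite <- !app_assoc).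
  assert (Hu : length u = 2 * length f + 11).
  { unfold u. rewrite !length_app, length_antipal_word, length_rev_compl, Ha.
    simpl. lia. }
  pose proof (bits_to_nat_lt u) as Hlt.
  rewrite bits_to_nat_app, Hu. rewrite Hu in Hlt.
  change (bits_to_nat [false; false; true]) with 4.
  rewrite (Nat.pow_add_r 2 _ 13), (Nat.pow_add_r 2 _ 11) in *.
  change (2 ^ 13) with (4 * 2 ^ 11). lia.
Qed.

Lemma padded_value_mod5 a M P :
  padded_value a M P mod 5 = padded_value a (M mod 5) (P mod 5) mod 5.
Proof.
  rewrite (Nat.div_mod_eq M 5) at 1. rewrite (Nat.div_mod_eq P 5) at 1.
  set (m := M mod 5). set (p := P mod 5).
  set (c := bits_to_nat (rev_compl a) + 64).
  replace (padded_value a (5 * (M / 5) + m) (5 * (P / 5) + p))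
    with (padded_value a m p + (128 * (M / 5) + 128 * (P / 5) * c) * 5)
    by (unfold padded_value; fold c; ring).
  apply Nat.Div0.mod_add.
Qed.

Lemma mod5_adjuster m p : m < 5 -> p = 1 \/ p = 4 ->
  exists a, length a = 4 /\ padded_value a m p mod 5 = 0.
Proof.
  intros Hm Hp.
  assert (Hsearch : existsb (fun a => padded_value a m p mod 5 =? 0) (words 4) = true).
  { destruct Hp as [-> | ->]; do 5 (destruct m as [|m]; [now vm_compute|]); lia. }
  apply existsb_exists in Hsearch as (a & Ha & Hval).
  exists a. split; [exact (in_words_length 4 a Ha) | now apply Nat.eqb_eq].
Qed.

Lemma pow4_mod5 r : 4 ^ r mod 5 = 1 \/ 4 ^ r mod 5 = 4.
Proof.
  induction r as [|r IH]; [now left|].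
  rewrite Nat.pow_succ_r', Nat.Div0.mul_mod.
  destruct IH as [-> | ->]; [right | left]; reflexivity.
Qed.

Lemma padded_word_multiple_of_10 f :
  exists a N, length a = 4 /\ bits_to_nat (padded_word a f) = N * 10.
Proof.
  destruct (mod5_adjuster (bits_to_nat (antipal_word f) mod 5) (4 ^ length f mod 5))
    as (a & Ha & Hmod).
  - apply Nat.mod_upper_bound. lia.
  - apply pow4_mod5.
  - rewrite <- padded_value_mod5, <- bits_to_nat_padded_word in Hmod by exact Ha.
    set (A := bits_to_nat (padded_word a f)) in *.
    assert (Heven :
      A = 2 * bits_to_nat (antipal_word ([true; true] ++ a ++ f) ++ [true])).
    { unfold A, padded_word. change ([false; true; true] ++ a ++ f)
        with (false :: [true; true] ++ a ++ f).
      now rewrite antipal_word_cons_false. }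
    exists a, (A / 10). split; [exact Ha|].
    pose proof (Nat.div_mod_eq A 5). pose proof (Nat.div_mod_eq A 10).
    pose proof (Nat.mod_upper_bound A 10). lia.
Qed.

Lemma even_length_quotients r : exists s, NoDup s /\
  (forall N, In N s -> 2 ^ (2 * r + 9) <= N < 2 ^ (2 * r + 10) /\ antipal_quotient N) /\
  length s = 2 ^ r.
Proof.
  apply (witnesses_of_words r (fun f N => length f = r /\
           exists a, length a = 4 /\ bits_to_nat (padded_word a f) = N * 10)).
  - intros x y N [Hx (a & Ha & HxN)] [Hy (b & Hb & HyN)].
    rewrite <- HyN in HxN. unfold padded_word in HxN.
    apply bits_to_nat_inj in HxN; [|rewrite !length_antipal_word, !length_app; lia].
    apply antipal_word_inj, app_inv_head in HxN; [|rewrite !length_app; lia].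
    apply app_inj_length in HxN as [_ Hxy]; [exact Hxy | lia].
  - intros f Hf. destruct (padded_word_multiple_of_10 f) as (a & N & Ha & HN).
    exists N. split; [split; [exact Hf | now exists a] | split].
    + pose proof (padded_word_bounds a f Ha) as Hbounds. rewrite HN, Hf in Hbounds.
      rewrite (Nat.pow_add_r 2 _ 13), (Nat.pow_add_r 2 _ 11) in Hbounds.
      rewrite (Nat.pow_add_r 2 _ 9), (Nat.pow_add_r 2 _ 10).
      set (X := 2 ^ (2 * r)) in *. simpl in *. lia.
    + exact (antipal_quotient_of_words ([true; true] ++ a ++ f) [true] N HN).
Qed.

Lemma antipal_quotients_in_range i : 10 <= i -> exists s, NoDup s /\
  (forall N, In N s -> 2 ^ (i - 1) <= N < 2 ^ i /\ antipal_quotient N) /\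
  2 ^ (i / 2) <= 32 * length s.
Proof.
  intros Hi. destruct (Nat.Even_or_Odd i) as [[k ->] | [k ->]].
  - destruct (even_length_quotients (k - 5)) as (s & Hs & HsP & Hlen).
    exists s. split; [exact Hs | split].
    + replace (2 * k - 1) with (2 * (k - 5) + 9) by lia.
      replace (2 * k) with (2 * (k - 5) + 10) by lia. exact HsP.
    + rewrite Nat.mul_comm, Nat.div_mul, Hlen by lia.
      replace k with (k - 5 + 5) at 1 by lia. rewrite Nat.pow_add_r. simpl. lia.
  - destruct (odd_length_quotients k) as (s & Hs & HsP & Hlen).
    exists s. split; [exact Hs | split].
    + replace (2 * k + 1 - 1) with (2 * k) by lia. exact HsP.
    + replace ((2 * k + 1) / 2) with k by (apply Nat.div_unique with 1; lia).
      lia.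
Qed.

Open Scope R_scope.

Lemma sqrt2_pow_le i : sqrt 2 ^ i <= 2 * INR (2 ^ (i / 2)).
Proof.
  assert (Hsqrt : 1 <= sqrt 2 <= 2).
  { rewrite <- sqrt_1. rewrite <- (sqrt_square 2) at 3 by lra.
    split; apply sqrt_le_1; lra. }
  rewrite (Nat.div_mod_eq i 2) at 1.
  rewrite pow_add, pow_mult, pow2_sqrt, pow_INR by lra.
  replace (INR 2) with 2 by (simpl; lra).
  pose proof (pow_le 2 (i / 2) ltac:(lra)).
  assert (Hrem : sqrt 2 ^ (i mod 2) <= 2).
  { assert (Hbit : (i mod 2 = 0 \/ i mod 2 = 1)%nat)
      by (pose proof (Nat.mod_upper_bound i 2); lia).
    destruct Hbit as [-> | ->]; simpl; lra. }
  nra.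
Qed.

Theorem theorem15 :
  exists c : R, 0 < c /\
  exists i0 : nat, forall i : nat, (i0 <= i)%nat ->
    exists s : list nat,
      NoDup s /\
      (forall N : nat, In N s ->
         (2 ^ (i - 1) <= N < 2 ^ i)%nat /\ antipal_quotient N) /\
      c * (sqrt 2) ^ i <= INR (length s).
Proof.
  exists (1 / 64). split; [lra|]. exists 10%nat. intros i Hi.
  destruct (antipal_quotients_in_range i Hi) as (s & Hs & HsP & Hcount).
  exists s. split; [exact Hs | split; [exact HsP|]].
  apply le_INR in Hcount. rewrite mult_INR in Hcount. simpl (INR 32) in Hcount.
  pose proof (sqrt2_pow_le i). lra.
Qed.
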